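(* Let $\mathfrak{R}$ be either $\mathbb{F}_q$ ($q$ a prime power) or $\mathbb{Z}_k$ ($k\ge 2$), with character $\chi$ as in the context. Let $C$ and $D$ be two $\mathfrak{R}$-linear codes of length $n$ and $\bm{w}\in\mathfrak{R}^n$. Then (i) $\displaystyle \mathfrak{Jac}(C^{\perp},D,\bm{w}; x_{a} : a \in \mathfrak{R}^{3})=\frac{1}{|C|}\,\mathfrak{Jac}\Big(C,D,\bm{w};\ \sum_{b\in\mathfrak{R}}\chi(a_1 b)\,x_{(b,a_2,a_3)} : a\in\mathfrak{R}^3\Big)$; (ii) $\displaystyle \mathfrak{Jac}(C^{\perp},D^{\perp},\bm{w}; x_{a} : a \in \mathfrak{R}^{3})=\frac{1}{|C||D|}\,\mathfrak{Jac}\Big(C,D,\bm{w};\ \sum_{b_1,b_2\in\mathfrak{R}}\chi(a_1 b_1+a_2b_2)\,x_{(b_1,b_2,a_3)} : a\in\mathfrak{R}^3\Big)$, where on the right-hand sides each variable $x_{(a_1,a_2,a_3)}$ of $\mathfrak{Jac}(C,D,\bm{w};x_a:a\in\mathfrak{R}^3)$ is replaced by the indicated linear form.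
   Context: An $\mathbb{F}_q$-linear code of length $n$ is a subspace of $\mathbb{F}_q^n$; a $\mathbb{Z}_k$-linear code of length $n$ is an additive subgroup of $\mathbb{Z}_k^n$. For $\bm{u},\bm{v}\in\mathfrak{R}^n$, $\bm{u}\cdot\bm{v}=\sum_i u_iv_i$, and $C^\perp=\{\bm{v}\in\mathfrak{R}^n : \bm{u}\cdot\bm{v}=0 \ \forall \bm{u}\in C\}$. The character $\chi$: if $\mathfrak{R}=\mathbb{F}_q$, $q=p^f$, fix a root $\lambda$ of a primitive irreducible polynomial of degree $f$ over $\mathbb{F}_p$, write $\alpha=\alpha_0+\alpha_1\lambda+\cdots+\alpha_{f-1}\lambda^{f-1}$ ($\alpha_i\in\mathbb{F}_p$) and set $\chi(\alpha)=\zeta_p^{\alpha_0}$, $\zeta_p$ a primitive $p$-th root of unity; if $\mathfrak{R}=\mathbb{Z}_k$, $\chi(\alpha)=\zeta_k^{\alpha}$, $\zeta_k$ a primitive $k$-th root of unity. For $a\in\mathfrak{R}^3$, $h_a(\bm{u},\bm{v};\bm{w})=\#\{i:(u_i,v_i,w_i)=a\}$, and the complete joint Jacobi polynomial is $\mathfrak{Jac}(C,D,\bm{w};x_a : a\in\mathfrak{R}^3)=\sum_{\bm{u}\in C,\bm{v}\in D}\prod_{a\in\mathfrak{R}^3}x_a^{h_a(\bm{u},\bm{v};\bm{w})}$. *)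

From HB Require Import structures.
From mathcomp Require Import all_boot all_order all_algebra all_field.
From mathcomp Require Import mpoly.

Set Implicit Arguments.
Unset Strict Implicit.
Unset Printing Implicit Defensive.

Import GRing.Theory Num.Theory.
Local Open Scope ring_scope.

Section Codes.
Variable R : finComNzRingType.

Definition dotp n (u v : 'rV[R]_n) : R := \sum_(i < n) u 0 i * v 0 i.

Definition linear_code n (C : {set 'rV[R]_n}) : Prop :=
  [/\ 0 \in C,
      (forall u v, u \in C -> v \in C -> u + v \in C) &
      (forall (a : R) u, u \in C -> a *: u \in C)].

Definition dual_code n (C : {set 'rV[R]_n}) : {set 'rV[R]_n} :=
  [set v | [forall u in C, dotp u v == 0]].

Definition hcount n (u v w : 'rV[R]_n) (a : R * R * R) : nat :=
  #|[set i : 'I_n | (u 0 i, v 0 i, w 0 i) == a]|.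

Definition nv : nat := #|{: R * R * R}|.

Definition xvar (a : R * R * R) : {mpoly algC[nv]} := 'X_(enum_rank a).

(* Complete joint Jacobi polynomial, with each variable x_a replaced by y a:
   Jac(C, D, w; y_a : a in R^3) = sum_{u in C, v in D} prod_a (y a)^(h_a(u,v;w)).
   With y = xvar this is the polynomial Jac(C, D, w; x_a : a in R^3) itself. *)
Definition jac n (C D : {set 'rV[R]_n}) (w : 'rV[R]_n)
  (y : R * R * R -> {mpoly algC[nv]}) : {mpoly algC[nv]} :=
  \sum_(u in C) \sum_(v in D) \prod_(a : R * R * R) y a ^+ hcount u v w a.

Definition form1 (chi : R -> algC) (a : R * R * R) : {mpoly algC[nv]} :=
  \sum_(b : R) chi (a.1.1 * b) *: xvar (b, a.1.2, a.2).

Definition form2 (chi : R -> algC) (a : R * R * R) : {mpoly algC[nv]} :=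
  \sum_(b1 : R) \sum_(b2 : R) chi (a.1.1 * b1 + a.1.2 * b2) *: xvar (b1, b2, a.2).

Definition jacobi_macwilliams (chi : R -> algC) : Prop :=
  forall (n : nat) (C D : {set 'rV[R]_n}) (w : 'rV[R]_n),
    linear_code C -> linear_code D ->
    jac (dual_code C) D w xvar = (#|C|%:R)^-1 *: jac C D w (form1 chi)
    /\
    jac (dual_code C) (dual_code D) w xvar
      = ((#|C| * #|D|)%N%:R)^-1 *: jac C D w (form2 chi).

End Codes.

(* Writing
   alpha = sum_{i<f} c_i lam^i with c_i in F_p (= {0,..,p-1}), chi(alpha) = zeta^(c_0). *)

Definition Fp_to (p : nat) (F : finFieldType) (c : 'F_p) : F := (val c)%:R.

Definition prim_poly_Fp (p f : nat) (P : {poly 'F_p}) : Prop :=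
  [/\ irreducible_poly P, size P = f.+1,
      P %| 'X^(p ^ f - 1) - 1 &
      forall e : nat, (0 < e < p ^ f - 1)%N -> ~~ (P %| 'X^e - 1)].

Definition Fq_char (F : finFieldType) (p f : nat) (lam : F) (zeta : algC)
  (alpha : F) : algC :=
  match [pick c : f.-tuple 'I_p |
           alpha == \sum_(i < f) (nat_of_ord (tnth c i))%:R * lam ^+ i] with
  | Some c => zeta ^+ (nth 0%N (map (@nat_of_ord p) c) 0)
  | None => 1
  end.

Definition Zk_char (k : nat) (zeta : algC) (alpha : 'Z_k) : algC :=
  zeta ^+ (val alpha).

From HB Require Import structures.
From mathcomp Require Import all_boot all_order all_algebra all_field.
From mathcomp Require Import mpoly.
Import GRing.Theory Num.Theory.
Local Open Scope ring_scope.

(* For a nondegenerate additive character chi (chi (a * s) != 1 for some s,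
   whenever a != 0) and a linear code C, the orthogonality relation
   sum_(u in C) chi (u . t) = |C| [t in C^perp] holds.  Expanding each
   substituted product coordinatewise and exchanging sums therefore collapses
   the right-hand side of (i) to the sum over C^perp; (ii) is (i) applied
   once to each code.  Both characters in question are nondegenerate: on Z_k
   chi 1 = zeta_k, and on F_q the lam-coordinates identify F with F_p^f (the
   minimal polynomial of lam has degree f), so chi is additive and chi 1 = zeta_p. *)

Section JacobiPolynomial.
Variable R : finComNzRingType.
Implicit Types (n : nat) (y : R * R * R -> {mpoly algC[nv R]}).

Lemma jac_prodE n (C D : {set 'rV[R]_n}) w y :
  jac C D w y = \sum_(u in C) \sum_(v in D) \prod_(i < n) y (u 0 i, v 0 i, w 0 i).
Proof.
apply: eq_bigr => u _; apply: eq_bigr => v _.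
rewrite (partition_big (fun i => (u 0 i, v 0 i, w 0 i)) predT) //=.
apply: eq_bigr => a _; rewrite -prodr_const; apply: esym; apply: eq_big => [i|i /eqP -> //].
by rewrite inE.
Qed.

Lemma jac_swap n (C D : {set 'rV[R]_n}) w y :
  jac C D w y = jac D C w (fun a => y (a.1.2, a.1.1, a.2)).
Proof. by rewrite !jac_prodE exchange_big. Qed.

Lemma eq_jac n (C D : {set 'rV[R]_n}) w y1 y2 : y1 =1 y2 ->
  jac C D w y1 = jac C D w y2.
Proof. by move=> eq_y; do 3!apply: eq_bigr => ? _; rewrite eq_y. Qed.

Lemma dotpDl n (u1 u2 t : 'rV[R]_n) : dotp (u1 + u2) t = dotp u1 t + dotp u2 t.
Proof. by rewrite /dotp -big_split; apply: eq_bigr => i _; rewrite mxE mulrDl. Qed.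

Lemma dotpZl n a (u t : 'rV[R]_n) : dotp (a *: u) t = a * dotp u t.
Proof. by rewrite /dotp mulr_sumr; apply: eq_bigr => i _; rewrite mxE mulrA. Qed.

Lemma linear_code_gt0 n (C : {set 'rV[R]_n}) : linear_code C -> (0 < #|C|)%N.
Proof. by case=> C0 _ _; apply/card_gt0P; exists 0. Qed.

Section NondegenerateCharacter.
Variable chi : R -> algC.
Hypothesis chi0 : chi 0 = 1.
Hypothesis chiD : {morph chi : x y / x + y >-> x * y}.
Hypothesis chi_nondeg : forall a : R, a != 0 -> exists s, chi (a * s) != 1.

Lemma sum_chi_dotp n (C : {set 'rV[R]_n}) t : linear_code C ->
  \sum_(u in C) chi (dotp u t) = if t \in dual_code C then #|C|%:R else 0.
Proof.
case=> C0 CD CZ; case: ifP => [/[!inE]/forall_inP tC | tCn].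
  by rewrite -sumr_const; apply: eq_bigr => u /tC/eqP ->.
have [u0 u0C dot_u0] : exists2 u0, u0 \in C & dotp u0 t != 0.
  apply/exists_inP; apply: contraFT tCn => /exists_inPn ut.
  by rewrite inE; apply/forall_inP => u /ut; rewrite negbK.
have [s chi_s] := chi_nondeg _ dot_u0.
have sC : s *: u0 \in C by exact: CZ.
set S := \sum_(u in C) _.
(* translating by s u0 permutes C and multiplies S by chi (s * (u0 . t)) != 1 *)
have S_inv : S = chi (dotp (s *: u0) t) * S.
  rewrite {1}/S (reindex_inj (addIr (s *: u0))) /= mulr_sumr.
  apply: eq_big => [u | u _]; last by rewrite dotpDl chiD mulrC.
  apply/idP/idP => [uC|]; last by move=> uC; exact: CD.
  by rewrite -(addrK (s *: u0) u) CD // -scaleN1r CZ.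
apply/eqP; move: S_inv => /eqP; rewrite -subr_eq0 -{1}[S]mul1r -mulrBl mulf_eq0.
by rewrite subr_eq0 dotpZl mulrC eq_sym (negbTE chi_s).
Qed.

Lemma jac_chi_formE n (C D : {set 'rV[R]_n}) w y :
  jac C D w (fun a => \sum_(b : R) chi (a.1.1 * b) *: y (b, a.1.2, a.2)) =
  \sum_(v in D) \sum_(t : 'rV[R]_n)
    (\sum_(u in C) chi (dotp u t)) *: \prod_(i < n) y (t 0 i, v 0 i, w 0 i).
Proof.
have row_bij : bijective (fun g : {ffun 'I_n -> R} => \row_i g i).
  exists (fun t : 'rV[R]_n => [ffun i => t 0 i]) => [g | t].
    by apply/ffunP => i; rewrite ffunE mxE.
  by apply/rowP => i; rewrite mxE ffunE.
rewrite jac_prodE exchange_big; apply: eq_bigr => v _.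
rewrite [RHS](reindex _ (onW_bij _ row_bij)) /=.
under eq_bigr => u _.
  rewrite bigA_distr_bigA /=.
  under eq_bigr => g _ do rewrite scaler_prod.
  over.
rewrite exchange_big; apply: eq_bigr => g _; rewrite scaler_suml.
apply: eq_bigr => u _; rewrite /dotp (big_morph chi chiD chi0).
by congr (_ *: _); apply: eq_bigr => i _; rewrite !mxE.
Qed.

Lemma jac_dual_codel n (C D : {set 'rV[R]_n}) w y : linear_code C ->
  jac (dual_code C) D w y =
  (#|C|%:R)^-1 *: jac C D w (fun a => \sum_(b : R) chi (a.1.1 * b) *: y (b, a.1.2, a.2)).
Proof.
move=> LC; have C_neq0 : #|C|%:R != 0 :> algC by rewrite pnatr_eq0 -lt0n linear_code_gt0.
rewrite jac_chi_formE jac_prodE exchange_big scaler_sumr; apply: eq_bigr => v _.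
rewrite scaler_sumr [RHS](bigID (mem (dual_code C))) /= [X in _ = _ + X]big1 => [|t tCn].
  rewrite addr0; apply: eq_bigr => t tC.
  by rewrite sum_chi_dotp // tC scalerA mulVf // scale1r.
by rewrite sum_chi_dotp // (negbTE tCn) scale0r scaler0.
Qed.

Lemma jacobi_macwilliams_nondeg : jacobi_macwilliams chi.
Proof.
move=> n C D w LC LD; split; first exact: jac_dual_codel.
rewrite jac_dual_codel // jac_swap jac_dual_codel // jac_swap scalerA -invfM -natrM mulnC.
congr (_ *: _); apply: eq_jac => a /=.
rewrite /form1 /form2 exchange_big; apply: eq_bigr => b1 _.
rewrite scaler_sumr; apply: eq_bigr => b2 _.
by rewrite scalerA chiD mulrC.
Qed.

End NondegenerateCharacter.
End JacobiPolynomial.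

Section PrimeSubfield.
Variables (p : nat) (F : finFieldType).
Hypothesis pF : p \in [pchar F].

Let p_prime : prime p := pcharf_prime pF.

Lemma Fp_to_natr n : Fp_to F (n%:R : 'F_p) = n%:R.
Proof.
have val_n : val (n%:R : 'F_p) = (n %% p)%N by exact: val_Fp_nat.
by rewrite /Fp_to val_n GRing.natr_mod_pchar.
Qed.

Lemma Fp_to_nmod_morphism : nmod_morphism (Fp_to F : 'F_p -> F).
Proof.
split=> [|a b]; first by rewrite /Fp_to.
by rewrite -[a]natr_Zp -[b]natr_Zp -natrD !Fp_to_natr natrD.
Qed.

Lemma Fp_to_monoid_morphism : monoid_morphism (Fp_to F : 'F_p -> F).
Proof.
split=> [|a b]; first by rewrite -[1]mulr1n Fp_to_natr.
by rewrite -[a]natr_Zp -[b]natr_Zp -natrM !Fp_to_natr natrM.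
Qed.

HB.instance Definition _ := GRing.isNmodMorphism.Build _ _ _ Fp_to_nmod_morphism.
HB.instance Definition _ := GRing.isMonoidMorphism.Build _ _ _ Fp_to_monoid_morphism.

End PrimeSubfield.

Section FiniteFieldCharacter.
Variables (p f : nat) (F : finFieldType) (lam : F) (zeta : algC) (P : {poly 'F_p}).
Hypotheses (pF : p \in [pchar F]) (cardF : #|F| = (p ^ f)%N).
Hypotheses (P_irr : irreducible_poly P) (P_size : size P = f.+1).
Hypothesis P_lam : root (map_poly (Fp_to F) P) lam.
Hypothesis zeta_prim : p.-primitive_root zeta.

Let p_prime : prime p := pcharf_prime pF.

Lemma lam_root_size_eq0 (Q : {poly 'F_p}) :
  (size Q <= f)%N -> root (map_poly (Fp_to F) Q) lam -> Q = 0.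
Proof.
move=> Q_size; apply: contraTeq => Q_neq0.
have P_Q : coprimep P Q.
  rewrite irreducible_poly_coprime //; apply/negP => /(dvdp_leq Q_neq0).
  by rewrite P_size ltnNge Q_size.
by apply: coprimep_root P_lam; rewrite coprimep_map.
Qed.

Definition lam_comb (c : f.-tuple 'I_p) : F :=
  \sum_(i < f) (nat_of_ord (tnth c i))%:R * lam ^+ i.

Definition tuple_poly (c : f.-tuple 'I_p) : {poly 'F_p} :=
  \poly_(i < f) (nth 0%N (map val c) i)%:R.

Lemma nth_map_val_tuple (c : f.-tuple 'I_p) (i : 'I_f) :
  nth 0%N (map val c) i = tnth c i.
Proof. by rewrite (nth_map (tnth c i)) ?size_tuple // -tnth_nth. Qed.

Lemma lam_combE c : lam_comb c = (map_poly (Fp_to F) (tuple_poly c)).[lam].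
Proof.
rewrite /tuple_poly poly_def rmorph_sum horner_sum; apply: eq_bigr => i _.
by rewrite /= map_polyZ map_polyXn hornerZ hornerXn rmorph_nat nth_map_val_tuple.
Qed.

Lemma tuple_poly_inj : injective tuple_poly.
Proof.
move=> c d /polyP eq_cd; apply: eq_from_tnth => i; apply: val_inj.
move/(congr1 val): (eq_cd i); rewrite !coef_poly ltn_ord !nth_map_val_tuple.
by rewrite /= !val_Fp_nat // !modn_small.
Qed.

Lemma lam_comb_inj : injective lam_comb.
Proof.
move=> c d eq_cd; apply: tuple_poly_inj; apply/eqP; rewrite -subr_eq0; apply/eqP.
apply: lam_root_size_eq0.
  by rewrite (leq_trans (size_polyD _ _)) // size_polyN geq_max !size_poly.
by rewrite /root rmorphB hornerD hornerN -!lam_combE eq_cd subrr.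
Qed.

Lemma lam_comb_bij : bijective lam_comb.
Proof. by apply: (inj_card_bij lam_comb_inj); rewrite card_tuple card_ord cardF. Qed.

Lemma field_degree_gt0 : (0 < f)%N.
Proof.
have : (1 < #|F|)%N by apply/card_gt1P; exists 0, 1; rewrite !inE eq_sym oner_eq0.
by rewrite cardF; case: (f) => //; rewrite expn0.
Qed.

Let chi := Fq_char p f lam zeta.
Let i0 : 'I_f := Ordinal field_degree_gt0.

Lemma Fq_char_lam_comb c : chi (lam_comb c) = zeta ^+ tnth c i0.
Proof.
rewrite /chi /Fq_char; case: pickP => [c' /eqP/lam_comb_inj <- | /(_ c)].
  by rewrite (tnth_nth (tnth c' i0)) (nth_map (tnth c' i0)) ?size_tuple ?field_degree_gt0.
by rewrite eqxx.
Qed.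

Lemma Fq_charD : {morph chi : x y / x + y >-> x * y}.
Proof.
have [g _ combK] := lam_comb_bij; move=> x y; rewrite -[x]combK -[y]combK.
set cx := g x; set cy := g y.
pose cz := [tuple Ordinal (ltn_pmod (tnth cx i + tnth cy i) (prime_gt0 p_prime)) | i < f].
have -> : lam_comb cx + lam_comb cy = lam_comb cz.
  rewrite /lam_comb -big_split; apply: eq_bigr => i _.
  by rewrite tnth_mktuple /= GRing.natr_mod_pchar // natrD mulrDl.
by rewrite !Fq_char_lam_comb tnth_mktuple /= (prim_expr_mod zeta_prim) exprD.
Qed.

Definition scalar_tuple (k : 'I_p) : f.-tuple 'I_p :=
  [tuple if i == i0 then k else Ordinal (prime_gt0 p_prime) | i < f].

Lemma Fq_char_natr (k : 'I_p) : chi (nat_of_ord k)%:R = zeta ^+ k.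
Proof.
have -> : (nat_of_ord k)%:R = lam_comb (scalar_tuple k).
  rewrite /lam_comb (bigD1 i0) //= big1 => [|i /negbTE i_neq0].
    by rewrite tnth_mktuple eqxx expr0 mulr1 addr0.
  by rewrite tnth_mktuple i_neq0 mul0r.
by rewrite Fq_char_lam_comb tnth_mktuple eqxx.
Qed.

Lemma Fq_char0 : chi 0 = 1.
Proof. exact: (Fq_char_natr (Ordinal (prime_gt0 p_prime))). Qed.

Lemma Fq_char_nondeg (a : F) : a != 0 -> exists s, chi (a * s) != 1.
Proof.
move=> a_neq0; exists a^-1; rewrite mulfV //.
rewrite (Fq_char_natr (Ordinal (prime_gt1 p_prime))).
by rewrite -(prim_order_dvd zeta_prim) dvdn1 eqn_leq leqNgt prime_gt1.
Qed.

Lemma jacobi_macwilliams_Fq_char : jacobi_macwilliams chi.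
Proof. exact: jacobi_macwilliams_nondeg Fq_char0 Fq_charD Fq_char_nondeg. Qed.

End FiniteFieldCharacter.

Section ResidueRingCharacter.
Variables (k : nat) (zeta : algC).
Hypotheses (k_gt1 : (1 < k)%N) (zeta_prim : k.-primitive_root zeta).

Lemma Zk_char0 : @Zk_char k zeta 0 = 1.
Proof. exact: expr0. Qed.

Lemma Zk_charD : {morph @Zk_char k zeta : x y / x + y >-> x * y}.
Proof.
have zeta_prim' : (Zp_trunc k).+2.-primitive_root zeta by rewrite Zp_cast.
by move=> x y; rewrite /Zk_char -exprD /= (prim_expr_mod zeta_prim').
Qed.

Lemma Zk_char_nondeg (a : 'Z_k) : a != 0 -> exists s, @Zk_char k zeta (a * s) != 1.
Proof.
move=> a_neq0; exists 1; rewrite mulr1 /Zk_char -(prim_order_dvd zeta_prim).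
have a_lt_k : (val a < k)%N by rewrite -[k in (_ < k)%N](Zp_cast k_gt1) ltn_ord.
have a_gt0 : (0 < val a)%N by rewrite lt0n; apply: contra a_neq0 => /eqP a0; apply/eqP/val_inj.
by apply/negP => /(dvdn_leq a_gt0); rewrite leqNgt a_lt_k.
Qed.

Lemma jacobi_macwilliams_Zk_char : jacobi_macwilliams (@Zk_char k zeta).
Proof. exact: jacobi_macwilliams_nondeg Zk_char0 Zk_charD Zk_char_nondeg. Qed.

End ResidueRingCharacter.

Theorem corollary3p4 :
  (* Case R = F_q, q = p^f *)
  (forall (F : finFieldType) (p f : nat) (lam : F) (zeta : algC),
     prime p -> p \in [pchar F] -> #|F| = (p ^ f)%N ->
     (exists P : {poly 'F_p},
        @prim_poly_Fp p f P /\ root (map_poly (@Fp_to p F) P) lam) ->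
     p.-primitive_root zeta ->
     jacobi_macwilliams (Fq_char p f lam zeta))
  /\
  (* Case R = Z_k, k >= 2 *)
  (forall (k : nat) (zeta : algC),
     (1 < k)%N -> k.-primitive_root zeta ->
     jacobi_macwilliams (@Zk_char k zeta)).
Proof.
(* primality of p follows from pF, and of P only irreducibility is needed *)
split=> [F p f lam zeta _ pF cardF [P [[P_irr P_size _ _] P_lam]] zeta_prim | k zeta].
  exact: jacobi_macwilliams_Fq_char pF cardF P_irr P_size P_lam zeta_prim.
exact: jacobi_macwilliams_Zk_char.
Qed.
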